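(* Let $\Psi$ be the set of vectors of $L$ of the form $r_{\lambda,\beta}=\bigl(\lambda;\,1,\ \theta\frac{-3-|\lambda|^2}{6}+\beta\bigr)$ with $\lambda\in\Lambda$ and $\beta\in\frac12\mathbb Z$ satisfying $2\beta+1\equiv|\lambda|^2\pmod 2$ (each such vector lies in $L$ and has norm $-3$). Then the graph of $\Psi$ is connected: any two elements of $\Psi$ are joined by a finite chain of elements of $\Psi$, consecutive elements $a,b$ of which satisfy $|\langle a,b\rangle|=\sqrt3$.
   Context: Let $\omega=e^{2\pi i/3}$, $\mathcal E=\mathbb Z[\omega]$, $\theta=\omega-\bar\omega=\sqrt{-3}$; Hermitian forms are conjugate-linear in the first variable; $|v|^2=\langle v,v\rangle$. Identify $\mathcal E/\theta\mathcal E=\mathbb F_3$. The complex Leech lattice $\Lambda\subset\mathcal E^{12}$ is the set of vectors $(m+\theta c_i+3z_i)_{i=1}^{12}$ with $m\in\{0,1,-1\}$, $c=(c_i)\in\{0,\pm1\}^{12}$ reducing mod $\theta$ to a codeword of the ternary Golay code $\mathcal C_{12}$, $z_i\in\mathcal E$, $\sum_i z_i\equiv m\pmod\theta$; $\mathcal C_{12}\subset\mathbb F_3^{12}$ has generator matrix $[I_6\mid A]$ with rows of $A$: $(0,1,1,1,1,1)$, $(-1,0,1,-1,-1,1)$, $(-1,1,0,1,-1,-1)$, $(-1,-1,1,0,1,-1)$, $(-1,-1,-1,1,0,1)$, $(-1,1,-1,-1,1,0)$. The form on $\Lambda$ is $\langle u,v\rangle=-\frac13\sum\bar u_iv_i$.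 $H=\mathcal E^2$ with form $u^*\begin{pmatrix}0&\bar\theta\\ \theta&0\end{pmatrix}v$, and $L=\Lambda\oplus H$ with elements written $(\lambda;\alpha,\beta)$, $\lambda\in\Lambda$, $(\alpha,\beta)\in H$. *)

From HB Require Import structures.
From mathcomp Require Import all_boot all_order all_algebra all_field.
Set Implicit Arguments. Unset Strict Implicit. Unset Printing Implicit Defensive.
Import Order.TTheory GRing.Theory Num.Theory.
Local Open Scope ring_scope.

Definition omega : algC := (-1 + 'i * sqrtC 3) / 2.
Definition theta : algC := omega - omega^*.

Definition isE (x : algC) : Prop := exists a b : int, x = a%:~R + b%:~R * omega.

(* rows of A in the generator matrix [I_6 | A] of the ternary Golay code *)
Definition Arows : seq (seq int) :=
  [:: [:: 0; 1; 1; 1; 1; 1];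
      [:: -1; 0; 1; -1; -1; 1];
      [:: -1; 1; 0; 1; -1; -1];
      [:: -1; -1; 1; 0; 1; -1];
      [:: -1; -1; -1; 1; 0; 1];
      [:: -1; 1; -1; -1; 1; 0]]%R.

Definition golayGen (j : 'I_6) (k : 'I_12) : int :=
  if (k < 6)%N then (k == j :> nat)%:Z
  else nth 0 (nth [::] Arows j) (k - 6)%N.

(* c (integer lift) reduces mod theta (i.e. mod 3 on integers) to a codeword of C12 *)
Definition golay_codeword (c : 'I_12 -> int) : Prop :=
  exists a : 'I_6 -> int, forall k : 'I_12,
    (c k = \sum_(j < 6) a j * golayGen j k %[mod 3])%Z.

Definition inLeech (v : {ffun 'I_12 -> algC}) : Prop :=
  exists (m : int) (c : 'I_12 -> int) (z : 'I_12 -> algC),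
    [/\ m \in [:: 0; 1; -1]%R,
        (forall i, c i \in [:: 0; 1; -1]%R) /\ golay_codeword c,
        (forall i, isE (z i)),
        (exists e, isE e /\ \sum_(i < 12) z i - m%:~R = theta * e) &
        (forall i, v i = m%:~R + theta * (c i)%:~R + 3 * z i)].

Definition leechForm (u v : {ffun 'I_12 -> algC}) : algC :=
  - (1 / 3) * \sum_(i < 12) (u i)^* * v i.

(* L = Lambda (+) H, elements (lambda; alpha, beta) *)
Definition Lvec := ({ffun 'I_12 -> algC} * algC * algC)%type.

Definition LForm (u v : Lvec) : algC :=
  leechForm u.1.1 v.1.1 + (u.1.2)^* * theta^* * v.2 + (u.2)^* * theta * v.1.2.

Definition rvec (l : {ffun 'I_12 -> algC}) (b : algC) : Lvec :=
  (l, 1, theta * ((-3 - leechForm l l) / 6) + b).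

Definition inPsi (x : Lvec) : Prop :=
  exists (l : {ffun 'I_12 -> algC}) (b : algC),
    [/\ inLeech l,
        (2 * b) \is a Num.int,
        ((leechForm l l - (2 * b + 1)) / 2) \is a Num.int &
        x = rvec l b].

Definition psiAdj (a b : Lvec) : bool := `|LForm a b| == sqrtC 3.

(* A minimal vector d of the Leech lattice (norm -6) moves every r_{l,b} of Psi to a neighbour
   r_{l+d,b'} of Psi: inner products of Leech vectors lie in theta E, and if <l,d> = theta (p + q w)
   then b' = b + (2p - q)/2 - 1 makes <r_{l,b}, r_{l+d,b'}> = theta.  The Leech lattice is
   additively generated by its minimal vectors 3(w^n e_i - e_j), theta g_j (g_j a Golay generator)
   and (-2,-2,1,...,1), so every element of Psi is joined to some r_{0,b} with b in 1/2 + Z.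
   Finally r_{0,b} and r_{0,b-1} are joined through a triangle 0 -> d1 -> d1 + d2 -> 0 of
   minimal vectors. *)

From HB Require Import structures.
From mathcomp Require Import all_boot all_order all_algebra all_field.
From mathcomp Require Import ring zify.
Import Order.TTheory GRing.Theory Num.Theory.
Local Open Scope ring_scope.
Set Implicit Arguments. Unset Strict Implicit. Unset Printing Implicit Defensive.

Local Notation V := {ffun 'I_12 -> algC}.

Lemma conj_sqrtC3 : (sqrtC 3 : algC)^* = sqrtC 3.
Proof. by apply: conj_Creal; rewrite ger0_real // sqrtC_ge0 ler0n. Qed.

Lemma omega_sq : omega ^+ 2 = -1 - omega.
Proof.
have hi := sqrCi algC; have hs : sqrtC 3 ^+ 2 = 3 :> algC := sqrtCK 3.
by rewrite /omega; field: hi hs.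
Qed.

Lemma conj_omega : omega^* = -1 - omega.
Proof.
rewrite /omega fmorph_div rmorphD rmorphN rmorphM /= conjCi conj_sqrtC3 !conjC_nat rmorph1.
by field.
Qed.

Lemma thetaE : theta = 1 + 2 * omega.
Proof. by rewrite /theta conj_omega; ring. Qed.

Lemma conj_theta : theta^* = - theta.
Proof. by rewrite /theta rmorphB /= conjCK opprB. Qed.

Lemma theta_sq : theta ^+ 2 = -3.
Proof. by rewrite thetaE; ring: omega_sq. Qed.

Lemma theta_neq0 : theta != 0.
Proof. by apply: contra_eqN theta_sq => /eqP ->; rewrite expr0n eq_sym oppr_eq0 pnatr_eq0. Qed.

Lemma normC_theta : `|theta| = sqrtC 3.
Proof.
have h : `|theta| ^+ 2 = 3 by rewrite normCK conj_theta mulrN -expr2 theta_sq opprK.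
by rewrite -h sqrCK.
Qed.

Lemma conjC_int (n : int) : (n%:~R : algC)^* = n%:~R.
Proof. exact: rmorph_int. Qed.

Definition eis (a b : int) : algC := a%:~R + b%:~R * omega.

Lemma isE_add x y : isE x -> isE y -> isE (x + y).
Proof. by move=> [a [b ->]] [c [d ->]]; exists (a + c), (b + d); rewrite !rmorphD; ring. Qed.

Lemma isE_opp x : isE x -> isE (- x).
Proof. by move=> [a [b ->]]; exists (- a), (- b); rewrite !rmorphN; ring. Qed.

Lemma isE_sub x y : isE x -> isE y -> isE (x - y).
Proof. by move=> hx /isE_opp; apply: isE_add. Qed.

Lemma isE_mul x y : isE x -> isE y -> isE (x * y).
Proof.
move=> [a [b ->]] [c [d ->]]; exists (a * c - b * d), (a * d + b * c - b * d).
by rewrite !(rmorphB, rmorphD, rmorphM); ring: omega_sq.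
Qed.

Lemma conj_eis a b : (eis a b)^* = eis (a - b) (- b).
Proof. by rewrite /eis rmorphD rmorphM /= !conjC_int conj_omega rmorphB rmorphN; ring. Qed.

Lemma isE_conj x : isE x -> isE x^*.
Proof. by move=> [a [b ->]]; rewrite -/(eis a b) conj_eis; exists (a - b), (- b). Qed.

Lemma isE_int (n : int) : isE n%:~R.
Proof. by exists n, 0; rewrite mul0r addr0. Qed.

Lemma isE_nat n : isE n%:R.
Proof. by rewrite pmulrn; apply: isE_int. Qed.

Lemma isE_0 : isE 0.
Proof. exact: isE_nat 0. Qed.

Lemma isE_1 : isE 1.
Proof. exact: isE_nat 1. Qed.

Lemma isE_omega : isE omega.
Proof. by exists 0, 1; rewrite mul1r add0r. Qed.

Lemma isE_theta : isE theta.
Proof. by rewrite thetaE; apply: isE_add isE_1 (isE_mul (isE_nat 2) isE_omega). Qed.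

Ltac isE_closure := repeat first
  [ assumption | apply: isE_0 | apply: isE_1 | apply: isE_int | apply: isE_nat
  | apply: isE_omega | apply: isE_theta | apply: isE_conj | apply: isE_opp
  | apply: isE_sub | apply: isE_add | apply: isE_mul ].

Lemma eis_inj a b c d : eis a b = eis c d -> a = c /\ b = d.
Proof.
move=> h; have hb : (b - d)%:~R * theta = 0 :> algC.
  have /(congr1 (fun x => x - x^* )) := h.
  by rewrite !conj_eis /eis thetaE !(rmorphB, rmorphN) => /eqP; rewrite -subr_eq0 => /eqP <-; ring.
move/eqP: hb; rewrite mulf_eq0 (negbTE theta_neq0) orbF intr_eq0 subr_eq0 => /eqP hb.
by move: h; rewrite /eis hb => /addIr /intr_inj.
Qed.

Definition isThE (x : algC) : Prop := exists2 e, isE e & x = theta * e.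

Lemma isThE_add x y : isThE x -> isThE y -> isThE (x + y).
Proof. by move=> [e he ->] [f hf ->]; exists (e + f); [apply: isE_add | ring]. Qed.

Lemma isThE_opp x : isThE x -> isThE (- x).
Proof. by move=> [e he ->]; exists (- e); [apply: isE_opp | ring]. Qed.

Lemma isThE_mulr x y : isThE x -> isE y -> isThE (x * y).
Proof. by move=> [e he ->] hy; exists (e * y); [apply: isE_mul | ring]. Qed.

Lemma isThE_theta x : isE x -> isThE (theta * x).
Proof. by exists x. Qed.

Lemma isThE_eis a b : isThE (eis a b) <-> (3 %| a + b)%Z.
Proof.
have theta_eis c d : theta * eis c d = eis (c - 2 * d) (2 * c - d).
  by rewrite thetaE /eis !(rmorphB, rmorphM); ring: omega_sq.
split.
  move=> [_ [c [d ->]] /esym]; rewrite -/(eis c d) theta_eis => /eis_inj [<- <-].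
  by apply/dvdzP; exists (c - d); ring.
move/dvdzP => [k hk]; exists (eis (2 * k - a) (k - a)); first by exists (2 * k - a), (k - a).
by rewrite theta_eis; congr eis; lia.
Qed.

Lemma isThE_int (n : int) : isThE n%:~R <-> (3 %| n)%Z.
Proof. by have := isThE_eis n 0; rewrite /eis mul0r !addr0. Qed.

Lemma isThE0 : isThE 0.
Proof. by exists 0; [apply: isE_0 | rewrite mulr0]. Qed.

Definition golaySpan (a : 'I_6 -> int) (k : 'I_12) : int := \sum_(j < 6) a j * golayGen j k.

Lemma golay_codewordP c :
  golay_codeword c <-> exists a, forall k, (3 %| c k - golaySpan a k)%Z.
Proof.
by split=> -[a ha]; exists a => k;
  [rewrite -eqz_mod_dvd; apply/eqP | apply/eqP; rewrite eqz_mod_dvd].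
Qed.

Lemma golay_codeword_congr c c' :
  golay_codeword c -> (forall k, 3 %| c' k - c k)%Z -> golay_codeword c'.
Proof.
move=> /golay_codewordP [a ha] h; apply/golay_codewordP; exists a => k.
by rewrite -(subrK (c k) (c' k)) -addrA; apply: rpredD.
Qed.

Lemma golay_codeword0 : golay_codeword (fun=> 0).
Proof.
apply/golay_codewordP; exists (fun=> 0) => k.
by rewrite /golaySpan big1 ?subrr // => j _; rewrite mul0r.
Qed.

Lemma golay_codeword_gen j : golay_codeword (golayGen j).
Proof.
apply/golay_codewordP; exists (fun l => (l == j)%:Z) => k.
rewrite /golaySpan (bigD1 j) //= eqxx mul1r big1 ?addr0 ?subrr // => l /negbTE ->.
by rewrite mul0r.
Qed.

Lemma golay_codewordD c c' :
  golay_codeword c -> golay_codeword c' -> golay_codeword (fun k => c k + c' k).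
Proof.
move=> /golay_codewordP [a ha] /golay_codewordP [a' ha'].
apply/golay_codewordP; exists (fun j => a j + a' j) => k.
have -> : c k + c' k - golaySpan (fun j => a j + a' j) k
        = (c k - golaySpan a k) + (c' k - golaySpan a' k).
  by rewrite /golaySpan (eq_bigr _ (fun j _ => mulrDl _ _ _)) big_split /=; ring.
exact: rpredD.
Qed.

Lemma golay_codewordN c : golay_codeword c -> golay_codeword (fun k => - c k).
Proof.
move=> /golay_codewordP [a ha]; apply/golay_codewordP; exists (fun j => - a j) => k.
have -> : - c k - golaySpan (fun j => - a j) k = - (c k - golaySpan a k).
  by rewrite /golaySpan (eq_bigr _ (fun j _ => mulNr _ _)) sumrN; ring.
by rewrite rpredN.
Qed.

Lemma golayGen_sum j : (3 %| \sum_(k < 12) golayGen j k)%Z.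
Proof. by rewrite !big_ord_recr big_ord0; case: j => -[|[|[|[|[|[|//]]]]]]. Qed.

Lemma golayGen_dot j l : (3 %| \sum_(k < 12) golayGen j k * golayGen l k)%Z.
Proof.
rewrite !big_ord_recr big_ord0.
by case: j => -[|[|[|[|[|[|//]]]]]] ?; case: l => -[|[|[|[|[|[|//]]]]]].
Qed.

Lemma golayGen_norm j : \sum_(k < 12) golayGen j k * golayGen j k = 6.
Proof. by rewrite !big_ord_recr big_ord0; case: j => -[|[|[|[|[|[|//]]]]]]. Qed.

Lemma golaySpan_sum a : \sum_(k < 12) golaySpan a k = \sum_j a j * \sum_(k < 12) golayGen j k.
Proof. by under [RHS]eq_bigr do rewrite mulr_sumr; rewrite exchange_big. Qed.

Lemma golaySpan_dot a a' :
  \sum_(k < 12) golaySpan a k * golaySpan a' k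
  = \sum_j \sum_l a j * a' l * \sum_(k < 12) golayGen j k * golayGen l k.
Proof.
under eq_bigr do rewrite /golaySpan mulr_suml; rewrite exchange_big /=.
apply: eq_bigr => j _; under eq_bigr do rewrite mulr_sumr; rewrite exchange_big /=.
by apply: eq_bigr => l _; rewrite mulr_sumr; apply: eq_bigr => k _; ring.
Qed.

Lemma golay_codeword_sum c : golay_codeword c -> (3 %| \sum_(k < 12) c k)%Z.
Proof.
move=> /golay_codewordP [a ha].
rewrite -(subrK (\sum_k golaySpan a k) (\sum_k c k)) -sumrB golaySpan_sum.
by apply: rpredD; apply: rpred_sum => i _; [apply: ha | apply/dvdz_mull/golayGen_sum].
Qed.

Lemma golay_codeword_dot c c' :
  golay_codeword c -> golay_codeword c' -> (3 %| \sum_(k < 12) c k * c' k)%Z.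
Proof.
move=> /golay_codewordP [a ha] /golay_codewordP [a' ha'].
have -> : \sum_k c k * c' k
    = \sum_k ((c k - golaySpan a k) * c' k + golaySpan a k * (c' k - golaySpan a' k))
      + \sum_k golaySpan a k * golaySpan a' k.
  by rewrite -big_split /=; apply: eq_bigr => k _; ring.
rewrite golaySpan_dot; apply: rpredD; apply: rpred_sum => i _.
  by apply: rpredD; [apply: dvdz_mulr | apply: dvdz_mull].
by apply: rpred_sum => l _; apply/dvdz_mull/golayGen_dot.
Qed.

Lemma leechFormDl u v w : leechForm (u + v) w = leechForm u w + leechForm v w.
Proof.
rewrite /leechForm -mulrDr -big_split /=; congr (_ * _).
by apply: eq_bigr => i _; rewrite ffunE rmorphD mulrDl.
Qed.

Lemma leechFormDr u v w : leechForm u (v + w) = leechForm u v + leechForm u w.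
Proof.
rewrite /leechForm -mulrDr -big_split /=; congr (_ * _).
by apply: eq_bigr => i _; rewrite ffunE mulrDr.
Qed.

Lemma leechFormNl u v : leechForm (- u) v = - leechForm u v.
Proof.
by rewrite /leechForm -[RHS]mulrN -sumrN; under eq_bigr do rewrite ffunE rmorphN mulNr.
Qed.

Lemma leechFormNr u v : leechForm u (- v) = - leechForm u v.
Proof.
by rewrite /leechForm -[RHS]mulrN -sumrN; under eq_bigr do rewrite ffunE mulrN.
Qed.

Lemma leechForm0l u : leechForm 0 u = 0.
Proof. by rewrite /leechForm big1 ?mulr0 // => i _; rewrite ffunE rmorph0 mul0r. Qed.

Lemma conj_leechForm u v : (leechForm u v)^* = leechForm v u.
Proof.
rewrite /leechForm (rmorphM Num.conj) (rmorph_sum Num.conj) /=; congr (_ * _).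
  by rewrite (rmorphN Num.conj) /= fmorph_div /= (rmorph1 Num.conj) conjC_nat.
by apply: eq_bigr => i _; rewrite rmorphM /= conjCK mulrC.
Qed.

Definition bmod3 (x : int) : int := ((x + 1) %% 3)%Z - 1.
Definition bdiv3 (x : int) : int := ((x + 1) %/ 3)%Z.

Lemma bdivmod3 x : x = bmod3 x + 3 * bdiv3 x.
Proof.
have := divz_eq (x + 1) 3; rewrite /bmod3 /bdiv3.
by set q := (_ %/ 3)%Z; set r := (_ %% 3)%Z; lia.
Qed.

Lemma bmod3_mem x : bmod3 x \in [:: 0; 1; -1].
Proof.
have := modz_ge0 (x + 1) (_ : 3 != 0); have := ltz_pmod (x + 1) (_ : 0 < 3).
by rewrite /bmod3 !inE; case: ((x + 1) %% 3)%Z => -[|[|[|n]]] //; lia.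
Qed.

(* [inLeech] without the normalisation m, c_i in {0, 1, -1}; [inLeechE] shows that this
   describes the same set, which in this form is visibly an additive group. *)
Definition isLeech (v : V) : Prop :=
  exists (m : int) (c : 'I_12 -> int) (z : 'I_12 -> algC),
    [/\ golay_codeword c, forall i, isE (z i), isThE (\sum_i z i - m%:~R) &
        forall i, v i = m%:~R + theta * (c i)%:~R + 3 * z i].

Lemma inLeechE v : inLeech v <-> isLeech v.
Proof.
split=> [[m [c [z [_ [_ hc] hz [e [he hs]] hv]]]] | [m [c [z [hc hz hs hv]]]]].
  by exists m, c, z; split=> //; exists e.
move: (bdivmod3 m) hs; set q := bdiv3 m; set r := bmod3 m => -> hs.
pose z' i := z i + q%:~R + theta * (bdiv3 (c i))%:~R.
exists r, (fun i => bmod3 (c i)), z'; split.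
- exact: bmod3_mem.
- split; first by move=> i; apply: bmod3_mem.
  apply: (golay_codeword_congr hc) => i; rewrite {2}(bdivmod3 (c i)).
  by apply/dvdzP; exists (- bdiv3 (c i)); ring.
- by move=> i; rewrite /z'; isE_closure.
- suff [e he ->] : isThE (\sum_i z' i - r%:~R) by exists e.
  have -> : \sum_i z' i - r%:~R = \sum_i z i - (r + 3 * q)%:~R
      + theta * (theta * (- 5 * q%:~R) + (\sum_i bdiv3 (c i))%:~R).
    rewrite /z' !big_split /= sumr_const card_ord rmorph_sum -mulr_sumr /=.
    by rewrite !(rmorphD, rmorphM) /=; ring: theta_sq.
  by apply: (isThE_add hs); apply: isThE_theta; isE_closure.
- by move=> i; rewrite hv /z' {1}(bdivmod3 (c i)) !(rmorphD, rmorphM) /=; ring.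
Qed.

Lemma isLeech0 : isLeech 0.
Proof.
exists 0, (fun=> 0), (fun=> 0); split=> [|i||i]; rewrite ?ffunE.
- exact: golay_codeword0.
- exact: isE_0.
- by rewrite big1 // subrr; apply: isThE0.
- by rewrite !mulr0 !addr0.
Qed.

Lemma isLeechD u v : isLeech u -> isLeech v -> isLeech (u + v).
Proof.
move=> [m [c [z [hc hz hs hu]]]] [n [d [w [hd hw hs' hv]]]].
exists (m + n), (fun k => c k + d k), (fun k => z k + w k); split=> [|i||i].
- exact: golay_codewordD.
- exact: isE_add.
- by move: (isThE_add hs hs'); rewrite big_split rmorphD /= addrACA opprD.
- by rewrite ffunE hu hv !rmorphD /=; ring.
Qed.

Lemma isLeechN u : isLeech u -> isLeech (- u).
Proof.
move=> [m [c [z [hc hz hs hu]]]].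
exists (- m), (fun k => - c k), (fun k => - z k); split=> [|i||i].
- exact: golay_codewordN.
- exact: isE_opp.
- by move: (isThE_opp hs); rewrite sumrN rmorphN opprB addrC opprK.
- by rewrite ffunE hu !rmorphN /=; ring.
Qed.

Lemma leechForm_isThE u v : isLeech u -> isLeech v -> isThE (leechForm u v).
Proof.
move=> [m [c [z [hc hz [ez hez hsz] hu]]]] [n [d [w [hd hw [ew hew hsw] hv]]]].
have int_sum3 (f : 'I_12 -> int) : (3 %| \sum_k f k)%Z ->
    exists F : int, \sum_k (f k)%:~R = 3 * F%:~R :> algC.
  by move=> /dvdzP [F hF]; exists F; rewrite -rmorph_sum /= hF rmorphM /= mulrC.
have [C sum_c] := int_sum3 _ (golay_codeword_sum hc).
have [D sum_d] := int_sum3 _ (golay_codeword_sum hd).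
have [P sum_cd] := int_sum3 _ (golay_codeword_dot hc hd).
have sum_zc : \sum_k (z k)^* = m%:~R - theta * ez^*.
  rewrite -rmorph_sum -[\sum_k z k](subrK m%:~R) hsz rmorphD rmorphM /=.
  by rewrite conj_theta conjC_int; ring.
have sum_w : \sum_k w k = n%:~R + theta * ew by rewrite -hsw; ring.
pose Y := \sum_k ((z k)^* * (d k)%:~R - (c k)%:~R * w k).
pose Q := \sum_k (z k)^* * w k.
have hY : isE Y by apply: (big_ind isE isE_0 isE_add) => k _; isE_closure.
have hQ : isE Q by apply: (big_ind isE isE_0 isE_add) => k _; isE_closure.
have -> : leechForm u v = theta * (2 * theta * m%:~R * n%:~R + theta * P%:~R + theta * Q
    - (m%:~R * D%:~R - n%:~R * C%:~R) - m%:~R * ew + n%:~R * ez^* - Y).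
  have expand k : (u k)^* * v k = m%:~R * n%:~R + theta * m%:~R * (d k)%:~R
      - theta * n%:~R * (c k)%:~R - theta ^+ 2 * ((c k * d k)%:~R) + 3 * m%:~R * w k
      + 3 * n%:~R * (z k)^* + 3 * theta * ((z k)^* * (d k)%:~R - (c k)%:~R * w k)
      + 9 * ((z k)^* * w k).
    by rewrite hu hv !rmorphD !rmorphM /= conj_theta !conjC_int conjC_nat; ring.
  rewrite /leechForm (eq_bigr _ (fun k _ => expand k)) !(big_split, sumrB) /=.
  rewrite sumr_const card_ord !sumrN -!mulr_sumr -/Y -/Q sum_c sum_d sum_cd sum_w sum_zc.
  by field: theta_sq.
by apply: isThE_theta; isE_closure.
Qed.

Lemma conj_LForm u v : (LForm u v)^* = LForm v u.
Proof.
rewrite /LForm -conj_leechForm; have := conj_theta; move: theta => t ht.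
by rewrite !(rmorphD Num.conj) !(rmorphM Num.conj) /= !conjCK ht /leechForm; ring.
Qed.

Lemma psiAdj_sym : symmetric psiAdj.
Proof. by move=> u v; rewrite /psiAdj -conj_LForm norm_conjC. Qed.

Lemma conj_half_int (x : algC) : 2 * x \is a Num.int -> x^* = x.
Proof.
move=> /Rreal_int hx; apply: conj_Creal.
have -> : x = 2^-1 * (2 * x) by rewrite mulKf // pnatr_eq0.
by apply: rpredM => //; rewrite rpredV ger0_real.
Qed.

Lemma LForm_rvec l b l' b' : b^* = b ->
  LForm (rvec l b) (rvec l' b')
  = leechForm l l' + (-3 - leechForm l' l') / 2 + (-3 - leechForm l l) / 2 + theta * (b - b').
Proof.
move=> hb; have hN : (leechForm l l)^* = leechForm l l by rewrite conj_leechForm.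
have h6 : ((-3 - leechForm l l) / 6)^* = (-3 - leechForm l l) / 6.
  by rewrite fmorph_div (rmorphB Num.conj) (rmorphN Num.conj) /= hN !conjC_nat.
rewrite /LForm /rvec /=; have := conj_theta; have := theta_sq; move: theta => t t2 tc.
rewrite (rmorph1 Num.conj) (rmorphD Num.conj) (rmorphM Num.conj) /= h6 hb tc.
by field: t2.
Qed.

Definition psiPair (l : V) (b : algC) : Prop :=
  [/\ inLeech l, 2 * b \is a Num.int & (leechForm l l - (2 * b + 1)) / 2 \is a Num.int].

Lemma psiPair_inPsi l b : psiPair l b -> inPsi (rvec l b).
Proof. by move=> [hl hb hN]; exists l, b. Qed.

Lemma psiPair_step l b d p q (s : int) :
    psiPair l b -> isLeech d -> leechForm d d = -6 -> leechForm l d = theta * eis p q ->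
  let b' := b + (2 * p - q)%:~R / 2 - s%:~R in
  psiPair (l + d) b' /\ LForm (rvec l b) (rvec (l + d) b') = theta * s%:~R.
Proof.
move=> [hl hb hN] hd hdd hld b'.
have hdl : leechForm d l = - theta * eis (p - q) (- q).
  by rewrite -conj_leechForm hld rmorphM /= conj_theta conj_eis.
have hN' : leechForm (l + d) (l + d) = leechForm l l - 3 * q%:~R - 6.
  rewrite leechFormDl !leechFormDr hld hdl hdd /eis thetaE !(rmorphB, rmorphN) /=.
  by ring: omega_sq.
have hb' : 2 * b' = 2 * b + (2 * p - q - 2 * s)%:~R.
  by rewrite /b' !(rmorphB, rmorphM) /=; field.
have hN'' : (leechForm (l + d) (l + d) - (2 * b' + 1)) / 2
            = (leechForm l l - (2 * b + 1)) / 2 + (s - p - q - 3)%:~R.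
  by rewrite hN' hb' !(rmorphB, rmorphM) /=; field.
split; first split.
- by apply/inLeechE/isLeechD => //; apply/inLeechE.
- by rewrite hb' rpredD // intr_int.
- by rewrite hN'' rpredD // intr_int.
rewrite LForm_rvec ?conj_half_int //.
rewrite hN' leechFormDr hld /b' /eis thetaE !(rmorphB, rmorphM) /=.
by field: omega_sq.
Qed.

Section AdditiveClosure.
Variables (W : zmodType) (P : W -> Prop).

Definition sumOf (v : W) : Prop :=
  exists2 s : seq W, (forall x, x \in s -> P x) & v = \sum_(x <- s) x.

Lemma sumOf0 : sumOf 0.
Proof. by exists [::]; rewrite ?big_nil. Qed.

Lemma sumOf_mem v : P v -> sumOf v.
Proof. by exists [:: v]; [move=> x /[!inE] /eqP -> | rewrite big_seq1]. Qed.

Lemma sumOfD u v : sumOf u -> sumOf v -> sumOf (u + v).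
Proof.
move=> [s hs ->] [t ht ->]; exists (s ++ t); last by rewrite big_cat.
by move=> x /[!mem_cat] /orP[/hs | /ht].
Qed.

Lemma sumOf_sum (I : finType) (F : I -> W) : (forall i, sumOf (F i)) -> sumOf (\sum_i F i).
Proof. by move=> hF; apply: (big_ind sumOf sumOf0 sumOfD). Qed.

Hypothesis PN : forall x, P x -> P (- x).

Lemma sumOfN v : sumOf v -> sumOf (- v).
Proof.
move=> [s hs ->]; exists (map -%R s); last by rewrite big_map sumrN.
by move=> _ /mapP [x /hs hx ->]; apply: PN.
Qed.

Lemma sumOfMz v n : sumOf v -> sumOf (v *~ n).
Proof.
move=> hv; have hnat k : sumOf (v *+ k).
  by elim: k => [|k IH]; [rewrite mulr0n; apply: sumOf0 | rewrite mulrS; apply: sumOfD].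
by case: n => k; rewrite ?NegzE ?mulrNz -pmulrn //; apply: sumOfN.
Qed.

End AdditiveClosure.

(* -6 is the minimal norm of the Leech lattice in this scaling. *)
Definition minLeech (d : V) : Prop := isLeech d /\ leechForm d d = -6.

Lemma minLeechN d : minLeech d -> minLeech (- d).
Proof. by move=> [hd hdd]; split; [apply: isLeechN | rewrite leechFormNl leechFormNr opprK]. Qed.

Local Notation sumOfMin := (sumOf minLeech).

Lemma sumOfMinN v : sumOfMin v -> sumOfMin (- v).
Proof. exact/sumOfN/minLeechN. Qed.

Lemma sumOfMinMz v n : sumOfMin v -> sumOfMin (v *~ n).
Proof. exact/sumOfMz/minLeechN. Qed.

Definition dlt (i k : 'I_12) : algC := (k == i)%:R.

Definition diff3 (i j : 'I_12) (u : algC) : V := [ffun k => 3 * (u * dlt i k - dlt j k)].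

Lemma isE_omegaX n : isE (omega ^+ n).
Proof. by elim: n => [|n IH]; rewrite ?expr0 ?exprS; isE_closure. Qed.

Lemma sum_support2 (I : finType) (M : nmodType) (F : I -> M) i j : i != j ->
  (forall k, k != i -> k != j -> F k = 0) -> \sum_k F k = F i + F j.
Proof.
move=> hij hF; rewrite (bigD1 i) //= (big_only1 j) // => [|k hkj /hF]; first by rewrite eq_sym.
by apply; rewrite hkj.
Qed.

Lemma minLeech_diff3 i j n : i != j -> minLeech (diff3 i j (omega ^+ n)).
Proof.
move=> hij; have hu := isE_omegaX n.
have dlt0 k : k != i -> k != j -> dlt i k = 0 /\ dlt j k = 0.
  by move=> hki hkj; rewrite /dlt (negbTE hki) (negbTE hkj).
have [dii djj dij dji] : [/\ dlt i i = 1, dlt j j = 1, dlt i j = 0 & dlt j i = 0].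
  by rewrite /dlt !eqxx eq_sym (negbTE hij).
split.
  exists 0, (fun=> 0), (fun k => omega ^+ n * dlt i k - dlt j k); split=> [|k||k].
  - exact: golay_codeword0.
  - by rewrite /dlt; case: (k == i); case: (k == j); isE_closure.
  - rewrite (sum_support2 hij) => [|k hki hkj]; last first.
      by have [-> ->] := dlt0 k hki hkj; rewrite mulr0 subrr.
    rewrite dii djj dij dji mulr0 mulr1 subr0 sub0r addrC subr0 addrC subrX1.
    apply: isThE_mulr; last by apply: (big_ind isE isE_0 isE_add) => l _; apply: isE_omegaX.
    by have := (isThE_eis (-1) 1).2 (dvdz0 _); rewrite /eis mul1r addrC.
  - by rewrite ffunE mulr0 !add0r.
rewrite /leechForm (sum_support2 hij) => [|k hki hkj]; last first.
  by rewrite !ffunE; have [-> ->] := dlt0 k hki hkj; rewrite mulr0 subrr mulr0 conjC0 mul0r.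
have unit : omega ^+ n * (omega ^+ n)^* = 1.
  by rewrite (rmorphXn Num.conj) /= -exprMn conj_omega (_ : _ * _ = 1) ?expr1n //; ring: omega_sq.
rewrite !ffunE dii djj dij dji !rmorphM !rmorphB /= conjC_nat rmorph0 rmorph1.
by field: unit.
Qed.

Definition e3 (i : 'I_12) (x : algC) : V := [ffun k => 3 * x * dlt i k].
Definition i0 : 'I_12 := ord0.
Definition i1 : 'I_12 := Ordinal (isT : 1 < 12)%N.
Definition i2 : 'I_12 := Ordinal (isT : 2 < 12)%N.

Lemma sumOfMin_e3 i n : sumOfMin (e3 i (omega ^+ n) - e3 i0 1).
Proof.
have [->|hi] := eqVneq i i0.
  rewrite (_ : _ - _ = diff3 i0 i1 (omega ^+ n) + diff3 i1 i0 (omega ^+ 0)).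
    by apply: sumOfD; apply/sumOf_mem/minLeech_diff3.
  by apply/ffunP => k; rewrite !ffunE expr0; ring.
rewrite (_ : _ - _ = diff3 i i0 (omega ^+ n)); first exact/sumOf_mem/minLeech_diff3.
by apply/ffunP => k; rewrite !ffunE; ring.
Qed.

Lemma sumOfMin_e3_3 : sumOfMin (e3 i0 3).
Proof.
rewrite (_ : e3 i0 3 = - (diff3 i1 i0 (omega ^+ 0) + diff3 i1 i0 (omega ^+ 1)
                          + diff3 i1 i0 (omega ^+ 2))).
  by apply/sumOfMinN/sumOfD; [apply: sumOfD|]; apply/sumOf_mem/minLeech_diff3.
by apply/ffunP => k; rewrite !ffunE expr0 expr1 omega_sq; ring.
Qed.

Lemma sumOfMin_3vec (w : 'I_12 -> algC) :
  (forall k, isE (w k)) -> isThE (\sum_k w k) -> sumOfMin [ffun k => 3 * w k].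
Proof.
move=> hw; have /fin_all_exists [f hf] : forall k, exists p : int * int, w k = eis p.1 p.2.
  by move=> k; have [a [b ->]] := hw k; exists (a, b).
pose a i := (f i).1; pose b i := (f i).2.
have -> : \sum_k w k = eis (\sum_i a i) (\sum_i b i).
  by rewrite /eis !rmorph_sum mulr_suml -big_split; apply: eq_bigr => k _; rewrite hf.
move=> /isThE_eis /dvdzP [q hq].
have -> : [ffun k => 3 * w k] = \sum_i ((e3 i (omega ^+ 0) - e3 i0 1) *~ a i
                                        + (e3 i (omega ^+ 1) - e3 i0 1) *~ b i) + e3 i0 3 *~ q.
  apply/ffunP => k; rewrite !ffunE sum_ffunE.
  have term i : ((e3 i (omega ^+ 0) - e3 i0 1) *~ a i + (e3 i (omega ^+ 1) - e3 i0 1) *~ b i) k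
              = 3 * dlt i k * w i - 3 * dlt i0 k * (a i + b i)%:~R.
    by rewrite !(ffunE, ffunMzE) hf /eis expr0 expr1 rmorphD; ring.
  rewrite (eq_bigr _ (fun i _ => term i)) sumrB -mulr_sumr -rmorph_sum big_split /= hq.
  rewrite (big_only1 k) // => [|j hj _]; last by rewrite /dlt eq_sym (negbTE hj) mulr0 mul0r.
  by rewrite ffunMzE ffunE /dlt eqxx intrM /=; ring.
apply: sumOfD; last exact/sumOfMinMz/sumOfMin_e3_3.
by apply: sumOf_sum => i; apply: sumOfD; apply/sumOfMinMz/sumOfMin_e3.
Qed.

Definition golayRoot (j : 'I_6) : V := [ffun k => theta * (golayGen j k)%:~R].

Lemma minLeech_golayRoot j : minLeech (golayRoot j).
Proof.
split.
  exists 0, (golayGen j), (fun=> 0); split=> [|k||k].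
  - exact: golay_codeword_gen.
  - exact: isE_0.
  - by rewrite big1 // subrr; apply: isThE0.
  - by rewrite ffunE mulr0 add0r addr0.
rewrite /leechForm (eq_bigr (fun k => 3 * (golayGen j k * golayGen j k)%:~R)) => [|k _].
  by rewrite -mulr_sumr -rmorph_sum /= golayGen_norm; field.
by rewrite ffunE rmorphM /= conj_theta conjC_int intrM; ring: theta_sq.
Qed.

Definition z0 (k : 'I_12) : algC := if (k < 2)%N then -1 else 0.
Definition w0 : V := [ffun k => 1 + 3 * z0 k].

Lemma sum_z0 : \sum_k z0 k = -2.
Proof. by rewrite !big_ord_recr big_ord0 /z0 /=; ring. Qed.

Lemma minLeech_w0 : minLeech w0.
Proof.
split.
  exists 1, (fun=> 0), z0; split=> [|k||k].
  - exact: golay_codeword0.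
  - by rewrite /z0; case: ifP => _; isE_closure.
  - suff -> : \sum_k z0 k - (1 : int)%:~R = (-3 : int)%:~R by apply/isThE_int.
    by rewrite sum_z0; ring.
  - by rewrite ffunE mulr0 addr0.
rewrite /leechForm !big_ord_recr big_ord0 !ffunE /z0 /=.
rewrite !(rmorphD Num.conj, rmorphM Num.conj, rmorphN Num.conj) /=.
by rewrite !(rmorph1 Num.conj, rmorph0 Num.conj) /=; field.
Qed.

Lemma isLeech_sumOfMin v : isLeech v -> sumOfMin v.
Proof.
move=> [m [c [z [/golay_codewordP [a ha] hz hs hv]]]].
pose t k := ((c k - golaySpan a k) %/ 3)%Z.
have hc k : c k = golaySpan a k + 3 * t k by rewrite /t mulrC divzK ?ha //; ring.
pose z2 k := z k - m%:~R * z0 k + theta * (t k)%:~R.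
have -> : v = w0 *~ m + \sum_j golayRoot j *~ a j + [ffun k => 3 * z2 k].
  apply/ffunP => k; rewrite !ffunE sum_ffunE ffunMzE ffunE hv hc /z2.
  under eq_bigr do rewrite ffunMzE ffunE.
  rewrite /golaySpan rmorphD rmorph_sum mulrDr mulr_sumr.
  by rewrite (eq_bigr (fun i => theta * (golayGen i k)%:~R *~ a i)) => [|i _]; ring.
apply: sumOfD; first apply: sumOfD.
- exact/sumOfMinMz/sumOf_mem/minLeech_w0.
- by apply: sumOf_sum => j; apply/sumOfMinMz/sumOf_mem/minLeech_golayRoot.
apply: sumOfMin_3vec => [k|]; first by rewrite /z2 /z0; case: ifP => _; isE_closure.
have -> : \sum_k z2 k = \sum_k z k - m%:~R + theta * (theta * (- m%:~R) + (\sum_k t k)%:~R).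
  by rewrite /z2 !big_split /= sumrN -mulr_sumr -mulr_sumr -rmorph_sum sum_z0; ring: theta_sq.
by apply: (isThE_add hs); apply: isThE_theta; isE_closure.
Qed.

Section Chains.
Variables (T : eqType) (e : rel T) (P : T -> Prop).

Definition chain (a b : T) : Prop :=
  exists s : seq T, [/\ path e a s, last a s = b & forall x, x \in s -> P x].

Lemma chain_refl a : chain a a.
Proof. by exists [::]. Qed.

Lemma chain_trans a b c : chain a b -> chain b c -> chain a c.
Proof.
move=> [s [hs <- Ps]] [t [ht <- Pt]]; exists (s ++ t); split.
- by rewrite cat_path hs.
- by rewrite last_cat.
- by move=> x /[!mem_cat] /orP[/Ps | /Pt].
Qed.

Lemma chain_edge a b : e a b -> P b -> chain a b.
Proof. by move=> hab Pb; exists [:: b]; split=> [|//|x /[!inE] /eqP ->] /=; rewrite ?hab. Qed.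

Hypothesis e_sym : symmetric e.

Lemma chain_sym a b : P a -> chain a b -> chain b a.
Proof.
move=> Pa [s [hs <- Ps]]; exists (rev (belast a s)); split.
- by rewrite rev_path (eq_path (fun x y => e_sym y x)).
- by case: s {hs Ps} => //= y s; rewrite rev_cons last_rcons.
- by move=> x /[!mem_rev] /mem_belast /[!inE] /orP[/eqP -> | /Ps].
Qed.

Lemma chain_int (f : int -> T) : (forall k, P (f k)) ->
  (forall k, chain (f (k + 1)) (f k)) -> forall k, chain (f k) (f 0).
Proof.
move=> Pf hf; elim/int_rec => [|n IH|n IH]; first exact: chain_refl.
  by apply: chain_trans IH; rewrite -addn1 PoszD; apply: hf.
apply: chain_trans IH; apply: chain_sym => //.
by have := hf (- n.+1%:Z); rewrite -addn1 PoszD opprD addrNK.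
Qed.

End Chains.

Local Notation psiChain := (chain psiAdj inPsi).

Lemma psiAdj_theta_sign x y (s : int) :
  s = 1 \/ s = -1 -> LForm x y = theta * s%:~R -> psiAdj x y.
Proof.
move=> hs hxy; rewrite /psiAdj hxy normrM normC_theta.
by case: hs => ->; rewrite ?normrN normr1 mulr1.
Qed.

Lemma psi_step l b d : psiPair l b -> minLeech d ->
  exists b', psiPair (l + d) b' /\ psiAdj (rvec l b) (rvec (l + d) b').
Proof.
move=> hlb [hd hdd]; have [hl _ _] := hlb.
have [_ [p [q ->]] hld] := leechForm_isThE ((inLeechE l).1 hl) hd.
have [hlb' hadj] := psiPair_step 1 hlb hd hdd hld.
by eexists; split; [exact: hlb' | apply: psiAdj_theta_sign hadj; left].
Qed.

Lemma psi_step_real l b d (k s : int) : psiPair l b -> minLeech d ->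
    leechForm l d = 3 * k%:~R -> s = 1 \/ s = -1 ->
  psiPair (l + d) (b - s%:~R) /\ psiAdj (rvec l b) (rvec (l + d) (b - s%:~R)).
Proof.
move=> hlb [hd hdd] hld hs.
have hld' : leechForm l d = theta * eis (- k) (- 2 * k).
  by rewrite hld thetaE /eis intrM rmorphN; ring: omega_sq.
have [] := psiPair_step s hlb hd hdd hld'.
have -> : b + (2 * - k - - 2 * k)%:~R / 2 - s%:~R = b - s%:~R.
  by rewrite (_ : 2 * - k - - 2 * k = 0) ?mul0r ?addr0 //; ring.
by move=> h1 h2; split; last exact: psiAdj_theta_sign h2.
Qed.

Lemma psiChain_to_zero l b : psiPair l b ->
  exists b0, psiPair 0 b0 /\ psiChain (rvec l b) (rvec 0 b0).
Proof.
move=> hlb; have [hl _ _] := hlb.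
have [s hs hls] := isLeech_sumOfMin ((inLeechE l).1 hl).
elim: s l b hs hls hlb {hl} => [|d s IH] l b hs hls hlb.
  by move: hlb; rewrite hls big_nil => hlb; exists b; split; [|exact: chain_refl].
have [b' [hlb' hadj]] := psi_step hlb (minLeechN (hs d (mem_head _ _))).
have hls' : l - d = \sum_(x <- s) x by rewrite hls big_cons addrC addKr.
have hs' x : x \in s -> minLeech x by move=> hx; apply: hs; rewrite inE hx orbT.
have [b0 [h0 hc]] := IH _ _ hs' hls' hlb'.
exists b0; split=> //; apply: chain_trans hc.
exact: chain_edge hadj (psiPair_inPsi hlb').
Qed.

Lemma leechForm_diff3_adjacent :
  leechForm (diff3 i0 i1 (omega ^+ 0)) (diff3 i1 i2 (omega ^+ 0)) = 3.
Proof.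
rewrite /leechForm !big_ord_recr big_ord0 !ffunE /dlt /= expr0.
by rewrite !(rmorphM Num.conj, rmorphB Num.conj, rmorph1 Num.conj, rmorph0 Num.conj) /=; field.
Qed.

Lemma psiChain_shift b : psiPair 0 b -> psiChain (rvec 0 b) (rvec 0 (b - 1)).
Proof.
move=> hb; set d1 := diff3 i0 i1 (omega ^+ 0); set d2 := diff3 i1 i2 (omega ^+ 0).
set d12 := diff3 i0 i2 (omega ^+ 0).
have d1_min : minLeech d1 by apply: minLeech_diff3.
have d2_min : minLeech d2 by apply: minLeech_diff3.
have d12_min : minLeech d12 by apply: minLeech_diff3.
have d12E : 0 + d1 + d2 = d12 by apply/ffunP => k; rewrite !ffunE; ring.
(* <l, d> is successively 0, 3 and 6 along the triangle, so b moves by -1, -1 and +1. *)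
have F1 : leechForm 0 d1 = 3 * (0 : int)%:~R by rewrite leechForm0l mulr0.
have [h1 a1] := psi_step_real hb d1_min F1 (or_introl erefl).
have F2 : leechForm (0 + d1) d2 = 3 * (1 : int)%:~R.
  by rewrite add0r leechForm_diff3_adjacent mulr1.
have [h2 a2] := psi_step_real h1 d2_min F2 (or_introl erefl).
have F3 : leechForm (0 + d1 + d2) (- d12) = 3 * (2 : int)%:~R.
  by rewrite d12E leechFormNr d12_min.2 opprK; ring.
have [h3 a3] := psi_step_real h2 (minLeechN d12_min) F3 (or_intror erefl).
move: h3 a3; rewrite d12E subrr (_ : _ - _ = b - 1); last by rewrite !rmorphN; ring.
move=> h3 a3.
apply: chain_trans (chain_edge a1 (psiPair_inPsi h1)) _.
apply: chain_trans (chain_edge a2 (psiPair_inPsi h2)) _.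
by rewrite d12E; apply: chain_edge a3 (psiPair_inPsi h3).
Qed.

Lemma psiPair0_half_int b : psiPair 0 b -> exists k : int, b = 2^-1 + k%:~R.
Proof.
move=> [_ _ /intrP [N hN]]; rewrite leechForm0l in hN.
exists (- N - 1); have -> : b = - ((0 - (2 * b + 1)) / 2) - 2^-1 by field.
by rewrite hN rmorphB rmorphN /=; field.
Qed.

Lemma psiPair0_of_half_int (k : int) : psiPair 0 (2^-1 + k%:~R).
Proof.
split; first exact/inLeechE/isLeech0.
  by rewrite (_ : _ * _ = (1 + 2 * k)%:~R) ?intr_int // rmorphD rmorphM /=; field.
rewrite leechForm0l (_ : _ / 2 = (- 1 - k)%:~R) ?intr_int //.
by rewrite rmorphB rmorphN /=; field.
Qed.

Lemma psiChain_half k : psiChain (rvec 0 (2^-1 + k%:~R)) (rvec 0 2^-1).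
Proof.
have := chain_int psiAdj_sym (f := fun k : int => rvec 0 (2^-1 + k%:~R)) _ _ k.
rewrite rmorph0 addr0; apply=> [j | j]; first exact/psiPair_inPsi/psiPair0_of_half_int.
have := psiChain_shift (psiPair0_of_half_int (j + 1)).
by rewrite rmorphD /= addrA addrK.
Qed.

Theorem mainTheorem4 (a b : Lvec) :
  inPsi a -> inPsi b ->
  exists s : seq Lvec,
    [/\ path psiAdj a s, last a s = b & forall x, x \in s -> inPsi x].
Proof.
have to_half x : inPsi x -> psiChain x (rvec 0 2^-1).
  move=> [l [c [hl hc hN ->]]].
  have [c0 [h0 hchain]] := psiChain_to_zero (And3 hl hc hN).
  have [k hk] := psiPair0_half_int h0.
  by apply: chain_trans hchain _; rewrite hk; apply: psiChain_half.
move=> ha hb.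
exact: chain_trans (to_half a ha) (chain_sym psiAdj_sym hb (to_half b hb)).
Qed.
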